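(* Let $a$ and $b$ be relatively prime integers with $0<a<b$, and let $n=a+b$. Let $\pi$ be the permutation of $\{1,\ldots,n\}$ defined as follows: if $a=1$, $\pi=(2,3,\ldots,b+1,1)$; if $a\ge 2$, $\pi_i$ is the unique element of $\{1,\ldots,n\}$ with $\pi_i\equiv 1+(i-1)a \pmod{a+b}$, for $i=1,\ldots,n$. Let $a'\in\{1,\ldots,a+b-1\}$ be the inverse of $a$ modulo $a+b$, and let $b'=a+b-a'$. Then $(a',-b')$ is a $D$-pair corresponding to the permutation $\pi^{-1}$, i.e. the set of values $\{\pi^{-1}_{j+1}-\pi^{-1}_j : 1\le j\le n-1\}$ equals $\{a',-b'\}$.
   Context: A pair $(p,q)$ of distinct integers is a $D$-pair corresponding to a permutation $\sigma$ of $\{1,\ldots,n\}$ if the set of discrete derivative values $\{\sigma_{i+1}-\sigma_i : 1\le i\le n-1\}$ equals $\{p,q\}$. Here $\pi^{-1}$ denotes the inverse permutation, written as the sequence $(\pi^{-1}_1,\ldots,\pi^{-1}_n)$. *)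

From mathcomp Require Import all_boot all_order all_algebra all_fingroup.
Set Implicit Arguments. Unset Strict Implicit. Unset Printing Implicit Defensive.

(* Permutations of {1,...,n} are represented 0-based as {perm 'I_n}:
   the 1-based value pi_i corresponds to (val (s (i-1))).+1. *)

Lemma mod_lt_ord (n : nat) (k : 'I_n) (m : nat) : m %% n < n.
Proof. by apply: ltn_pmod; apply: leq_ltn_trans (ltn_ord k). Qed.

(* 0-based version of pi : if a = 1, pi = (2,3,...,b+1,1), i.e. k |-> (k+1) mod n;
   if a >= 2, pi_i = 1 + (i-1)a mod n, i.e. k |-> k*a mod n. *)
Definition pi_fun (a b : nat) (k : 'I_(a + b)) : 'I_(a + b) :=
  Ordinal (mod_lt_ord k (if a == 1 then k.+1 else k * a)).

Lemma pi_fun_inj (a b : nat) : coprime a b -> injective (@pi_fun a b).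
Proof.
move=> cab.
have key : forall c (k l : 'I_(a + b)), coprime (a + b) c -> k <= l ->
    k * c = l * c %[mod a + b] -> k = l.
  move=> c k l cnc kl /eqP; rewrite eq_sym eqn_mod_dvd ?leq_mul2r ?kl ?orbT //.
  rewrite -mulnBl Gauss_dvdl // => /dvdn_leq H; apply/val_inj/eqP.
  rewrite eqn_leq kl /=; case: (ltnP k l) => // lt.
  have := H; rewrite subn_gt0 => /(_ lt) H'.
  have : l - k < a + b by apply: leq_ltn_trans (leq_subr _ _) (ltn_ord l).
  by rewrite ltnNge H'.
have cn : coprime (a + b) a by rewrite /coprime gcdnC gcdnDl.
have cn1 : coprime (a + b) 1 by rewrite coprimen1.
move=> k l /(congr1 val) /=; case: ifP => _ E.
  have E' : k * 1 = l * 1 %[mod a + b] by apply/eqP; rewrite !muln1 -(eqn_modDr 1) !addn1 E.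
  by case: (leqP k l) => kl; [exact: (key _ k l cn1 kl E')|exact: esym (key _ l k cn1 (ltnW kl) (esym E'))].
by case: (leqP k l) => kl; [exact: (key _ k l cn kl E)|exact: esym (key _ l k cn (ltnW kl) (esym E))].
Qed.

Definition pi_perm (a b : nat) (H : coprime a b) : {perm 'I_(a + b)} :=
  perm (pi_fun_inj H).

Definition perm_seq (n : nat) (s : {perm 'I_n}) : seq nat :=
  [seq (val (s i)).+1 | i <- enum 'I_n].

Definition dderiv (s : seq nat) : seq int :=
  [seq ((nth 0 s j.+1)%:Z - (nth 0 s j)%:Z)%R | j <- iota 0 (size s).-1].

Definition Dpair (p q : int) (n : nat) (s : {perm 'I_n}) : Prop :=
  p != q /\ forall z : int, (z \in dderiv (perm_seq s)) = (z == p) || (z == q).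

(* The inverse sigma of pi moves by a fixed step modulo n: pi is affine,
   pi(k) = k a + e (mod n) with e = 1 if a = 1 and e = 0 otherwise, so
   pi(k + a') = pi(k) + 1 and hence sigma(l + 1) = sigma(l) + a' (mod n).
   Every difference of consecutive entries of sigma is therefore a' or
   a' - n.  Both occur because the last entry of sigma is neither 0 nor n - 1:
   the step leaving the entry 0 is a', the step leaving n - 1 is a' - n. *)

From mathcomp Require Import all_boot all_order all_algebra all_fingroup.
From mathcomp Require Import zify.

Set Implicit Arguments.
Unset Strict Implicit.
Unset Printing Implicit Defensive.

Lemma size_perm_seq n (s : {perm 'I_n}) : size (perm_seq s) = n.
Proof. by rewrite size_map size_enum_ord. Qed.

Lemma nth_perm_seq n (s : {perm 'I_n}) (k : 'I_n) :
  nth 0 (perm_seq s) k = (s k).+1.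
Proof. by rewrite (nth_map k) ?size_enum_ord // nth_ord_enum. Qed.

Lemma permV_cyclic_step n (p : {perm 'I_n}) (c : nat) :
  (forall k l : 'I_n, l = (k + c) %% n :> nat -> p l = (p k).+1 %% n :> nat) ->
  forall k l : 'I_n, l = k.+1 :> nat -> (p^-1 l)%g = ((p^-1 k)%g + c) %% n :> nat.
Proof.
move=> p_step k l lE.
have y_lt : ((p^-1 k)%g + c) %% n < n.
  by rewrite ltn_pmod // (leq_ltn_trans _ (ltn_ord k)).
suff py_l : p (Ordinal y_lt) = l by rewrite -py_l permK.
apply/val_inj; rewrite /= (p_step (p^-1 k)%g (Ordinal y_lt)) //.
by rewrite permKV -lE modn_small ?ltn_ord.
Qed.

Section CyclicStep.

Variables (n c : nat) (s : {perm 'I_n}).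
Hypothesis c_lt : c < n.
Hypothesis s_step :
  forall k l : 'I_n, l = k.+1 :> nat -> s l = (s k + c) %% n :> nat.

Lemma perm_seq_diff (k : 'I_n) : k.+1 < n ->
  ((nth 0 (perm_seq s) k.+1)%:Z - (nth 0 (perm_seq s) k)%:Z)%R =
  if s k + c < n then (c%:Z)%R else (- (n - c)%:Z)%R.
Proof.
move=> kn; rewrite -[k.+1]/(val (Ordinal kn)) !nth_perm_seq (@s_step k) //=.
have sk_lt := ltn_ord (s k); case: (ltnP (s k + c) n) => wrap.
  by rewrite modn_small //; lia.
have -> : s k + c = (s k + c - n) + n by lia.
by rewrite modnDr modn_small; lia.
Qed.

Lemma Dpair_cyclic_step : 0 < c ->
  (forall k : 'I_n, k.+1 = n -> 0 < s k < n.-1) ->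
  Dpair c (- (n - c)%:Z)%R s.
Proof.
move=> c_gt0 last_inner; split; first by apply/eqP => /(congr1 (fun z => 0 <= z)%R); lia.
have not_last (k : 'I_n) : ~~ (0 < s k < n.-1) -> k.+1 < n.
  by move=> extreme; rewrite ltn_neqAle ltn_ord andbT; apply: contraNneq extreme => /last_inner.
move=> z; rewrite /dderiv size_perm_seq; apply/mapP/idP.
  move=> [j]; rewrite mem_iota add0n => j_lt ->.
  have jn : j < n by lia.
  rewrite -[j]/(val (Ordinal jn)) perm_seq_diff /=; last by lia.
  by case: ifP; rewrite eqxx ?orbT.
have n_gt0 : 0 < n by lia.
have nm1_lt : n.-1 < n by lia.
case/orP => /eqP ->.
  have k_lt : (s^-1 (Ordinal n_gt0))%g.+1 < n by apply: not_last; rewrite permKV.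
  exists ((s^-1 (Ordinal n_gt0))%g : nat); first by rewrite mem_iota; lia.
  by rewrite perm_seq_diff // permKV /= add0n c_lt.
have k_lt : (s^-1 (Ordinal nm1_lt))%g.+1 < n.
  by apply: not_last; rewrite permKV /= ltnn andbF.
exists ((s^-1 (Ordinal nm1_lt))%g : nat); first by rewrite mem_iota; lia.
by rewrite perm_seq_diff // permKV /= ifN // -leqNgt; lia.
Qed.

End CyclicStep.

Section PiPerm.

Variables (a b : nat) (cab : coprime a b).
Local Notation n := (a + b).
Local Notation p := (pi_perm cab).

Lemma pi_permE (k : 'I_n) : p k = (k * a + (a == 1)) %% n :> nat.
Proof.
rewrite permE /=; case: eqP => [a1|_]; last by rewrite addn0.
by move: (k : nat) => m; rewrite a1 muln1 addn1.
Qed.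

Lemma pi_perm_step (a' : nat) : a * a' = 1 %[mod n] ->
  forall k l : 'I_n, l = (k + a') %% n :> nat -> p l = (p k).+1 %% n :> nat.
Proof.
move=> a'_inv k l lE.
rewrite !pi_permE lE -modnDml modnMml modnDml -[(_ %% n).+1]addn1 modnDml.
by rewrite mulnDl addnAC -modnDmr (mulnC a') a'_inv modnDmr.
Qed.

Lemma pi_permV_last_inner : 0 < a -> a < b ->
  forall k : 'I_n, k.+1 = n -> 0 < (p^-1 k)%g < n.-1.
Proof.
move=> a_gt0 a_lt_b k k_last.
set v := (p^-1 k)%g.
have pv : p v = n.-1 :> nat by rewrite permKV; lia.
have v_ne0 : (v : nat) <> 0.
  move=> v0; move: pv; rewrite pi_permE v0 mul0n add0n modn_small; case: eqP; lia.
have v_ne_max : (v : nat) <> n.-1.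
  move=> v_max; move: pv; rewrite pi_permE v_max; case: eqP => [a1|a_ne1].
    by rewrite a1 muln1 addn1 prednK ?modnn; lia.
  have -> : n.-1 * a + false = (a - 1) * n + (n - a) by nia.
  by rewrite modnMDl modn_small; lia.
have := ltn_ord v; lia.
Qed.

End PiPerm.

Theorem corollary2p6 (a b : nat) (cab : coprime a b) :
  0 < a -> a < b ->
  forall a' : nat, 0 < a' < a + b -> a * a' = 1 %[mod a + b] ->
  Dpair (a'%:Z) (- ((a + b - a')%:Z))%R (pi_perm cab)^-1.
Proof.
move=> a_gt0 a_lt_b a' /andP[a'_gt0 a'_lt] a'_inv.
apply: Dpair_cyclic_step => //.
  exact: permV_cyclic_step (pi_perm_step cab a'_inv).
exact: pi_permV_last_inner.
Qed.
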